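(* Let $\mathcal{L}$ be a Lie algebra over $\mathbf{k}$, $k\in\mathbf{k}$ nonzero, and let $((\mathcal{U},q),i)$ be the enveloping$^{6\text{-th}}$ algebra of $\mathcal{L}$; write $x$ for $i(x)$. Then there exist algebra homomorphisms $\varepsilon:\mathcal{U}\to\mathbf{k}$ and $\Delta:\mathcal{U}\to\mathcal{U}\otimes\mathcal{U}$ such that: $\Delta(q)=q\otimes q$; for $x\in\mathcal{L}$, $$\Delta(x)=(x+kqx-xq)\otimes1+1\otimes(x+kqx-xq)+(1-k)qx\otimes q+(1-k)q\otimes qx;$$ $(\mathrm{id}\otimes\Delta)\Delta=(\Delta\otimes\mathrm{id})\Delta$; $\varepsilon(q)=1$ and $\varepsilon(x)=0$ for $x\in\mathcal{L}$; and for all $a\in\mathcal{U}$, $(\varepsilon\otimes\mathrm{id})\Delta(a)=1\otimes\sigma(a)$ and $(\mathrm{id}\otimes\varepsilon)\Delta(a)=\sigma(a)\otimes1$, where $\sigma(a)=a+qa-aq$.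
   Context: Invariant algebra: for an associative algebra $A$ with identity and idempotent $q$, $(A,q)=\{x\in A: qxq=qx\}$; $\mathrm{Lie}(A,q)$ is $(A,q)$ with bracket $[x,y]_{6,k}=xy-yx-xyq+yxq+kxqy-kyqx$; invariant homomorphisms are unital multiplicative linear maps preserving distinguished idempotents. The enveloping$^{6\text{-th}}$ algebra $((\mathcal{U},q),i)$: $(\mathcal{U},q)$ an invariant algebra (here equal to all of $\mathcal{U}$), $i:\mathcal{L}\to\mathrm{Lie}(\mathcal{U},q)$ a Lie homomorphism, universal: every Lie homomorphism from $\mathcal{L}$ into $\mathrm{Lie}(A,q_A)$ of an invariant algebra factors uniquely through $i$ via an invariant homomorphism. Algebra homomorphisms are unital. *)

From HB Require Import structures.
From mathcomp Require Import all_boot all_algebra.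
From Stdlib Require Import ClassicalEpsilon.
Set Implicit Arguments. Unset Strict Implicit. Unset Printing Implicit Defensive.
Import GRing.Theory.
Local Open Scope ring_scope.

Section Defs.
Variable F : fieldType.

Definition lin (V W : lmodType F) (f : V -> W) : Prop :=
  forall (a : F) (x y : V), f (a *: x + y) = a *: f x + f y.

Definition bilin (V W M : lmodType F) (f : V -> W -> M) : Prop :=
  (forall y, lin (fun x => f x y)) /\ (forall x, lin (f x)).

Definition alg_hom (A B : algType F) (f : A -> B) : Prop :=
  lin f /\ f 1 = 1 /\ forall x y, f (x * y) = f x * f y.

Definition is_lie_bracket (L : lmodType F) (br : L -> L -> L) : Prop :=
  bilin br /\ (forall x, br x x = 0) /\
  (forall x y z, br x (br y z) + br y (br z x) + br z (br x y) = 0).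

Definition inv_mem (A : algType F) (q x : A) : Prop := q * x * q = q * x.

Definition br6 (k : F) (A : algType F) (q x y : A) : A :=
  x * y - y * x - x * y * q + y * x * q + k *: (x * q * y) - k *: (y * q * x).

Definition lie_hom6 (k : F) (L : lmodType F) (br : L -> L -> L)
  (A : algType F) (q : A) (f : L -> A) : Prop :=
  lin f /\ (forall x, inv_mem q (f x)) /\
  forall x y, f (br x y) = br6 k q (f x) (f y).

Definition inv_hom (A B : algType F) (q : A) (qB : B) (phi : A -> B) : Prop :=
  lin phi /\ phi 1 = 1 /\ (forall x y, phi (x * y) = phi x * phi y) /\
  phi q = qB /\ (forall x, inv_mem q x -> inv_mem qB (phi x)).

Definition is_env6 (k : F) (L : lmodType F) (br : L -> L -> L)
  (U : algType F) (q : U) (i : L -> U) : Prop :=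
  q * q = q /\ (forall x : U, inv_mem q x) /\ lie_hom6 k br q i /\
  forall (A : algType F) (qA : A), qA * qA = qA ->
  forall f : L -> A, lie_hom6 k br qA f ->
  exists phi : U -> A, (inv_hom q qA phi /\ forall x, phi (i x) = f x) /\
    forall psi : U -> A, inv_hom q qA psi -> (forall x, psi (i x) = f x) ->
      forall u, psi u = phi u.

End Defs.

(* A tensor product A (x) B of F-algebras, given by its universal property
   (as F-vector spaces) together with its algebra structure on pure tensors. *)
Record tensor (F : fieldType) (A B : algType F) := Tensor {
  tT :> algType F;
  tens : A -> B -> tT;
  tens_bilin : bilin tens;
  tens_one : tens 1 1 = 1;
  tens_mul : forall a a' b b', tens a b * tens a' b' = tens (a * a') (b * b');
  tens_univ : forall (M : lmodType F) (f : A -> B -> M), bilin f ->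
    exists g : tT -> M, (lin g /\ forall a b, g (tens a b) = f a b) /\
      forall g' : tT -> M, lin g' -> (forall a b, g' (tens a b) = f a b) ->
        forall t, g' t = g t
}.
Arguments tens {F A B} t _ _.

Definition tmap (F : fieldType) (A B C D : algType F)
  (T : tensor A B) (T' : tensor C D) (f : A -> C) (g : B -> D) : T -> T' :=
  epsilon (inhabits (fun _ => 0))
    (fun h : T -> T' => lin h /\ forall a b, h (tens T a b) = tens T' (f a) (g b)).

Definition tassoc (F : fieldType) (A B C : algType F)
  (TBC : tensor B C) (TAB : tensor A B)
  (T1 : tensor A TBC) (T2 : tensor TAB C) : T1 -> T2 :=
  epsilon (inhabits (fun _ => 0))
    (fun h : T1 -> T2 => lin h /\
       forall a b c, h (tens T1 a (tens TBC b c)) = tens T2 (tens TAB a b) c).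
Arguments tassoc {F A B C TBC TAB} T1 T2 _.
Arguments tmap {F A B C D} T T' f g _.

From HB Require Import structures.
From mathcomp Require Import all_boot all_algebra.
From mathcomp Require Import ring.
From Stdlib Require Import ClassicalEpsilon.
Set Implicit Arguments. Unset Strict Implicit. Unset Printing Implicit Defensive.
Import GRing.Theory.
Local Open Scope ring_scope.

(* Write y_k(a) = a + k q a - a q ("skew"), prim(b) = b (x) 1 + 1 (x) b and
   Pq(a) = q a (x) q + q (x) q a.  The coproduct is induced, through the
   universal property, by delta(a) = prim(y_k a) + (1 - k) Pq(a), and the
   counit by the zero map into (F, 1). *)

Section LinearMaps.
Variables (F : fieldType) (V W X : lmodType F).

Lemma lin0 (f : V -> W) : lin f -> f 0 = 0.
Proof.
move=> fL; have := fL 1 0 0; rewrite !scale1r !addr0 => f00.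
by apply: (addrI (f 0)); rewrite addr0 -f00.
Qed.

Lemma linD (f : V -> W) : lin f -> forall x y, f (x + y) = f x + f y.
Proof. by move=> fL x y; have := fL 1 x y; rewrite !scale1r. Qed.

Lemma linZ (f : V -> W) : lin f -> forall a x, f (a *: x) = a *: f x.
Proof. by move=> fL a x; rewrite -(addr0 (a *: x)) fL (lin0 fL) addr0. Qed.

Lemma linN (f : V -> W) : lin f -> forall x, f (- x) = - f x.
Proof. by move=> fL x; rewrite -scaleN1r (linZ fL) scaleN1r. Qed.

Lemma linB (f : V -> W) : lin f -> forall x y, f (x - y) = f x - f y.
Proof. by move=> fL x y; rewrite (linD fL) (linN fL). Qed.

Lemma lin_id : lin (fun x : V => x).
Proof. by []. Qed.

Lemma lin_comp (f : V -> W) (g : W -> X) : lin f -> lin g -> lin (fun x => g (f x)).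
Proof. by move=> fL gL a x y; rewrite fL gL. Qed.

Lemma lin_add (f g : V -> W) : lin f -> lin g -> lin (fun x => f x + g x).
Proof.
move=> fL gL a x y; rewrite fL gL scalerDr -!addrA; congr (_ + _).
by rewrite addrCA.
Qed.

Lemma lin_scale (f : V -> W) (c : F) : lin f -> lin (fun x => c *: f x).
Proof. by move=> fL a x y; rewrite fL scalerDr !scalerA mulrC. Qed.

Lemma lin_sub (f g : V -> W) : lin f -> lin g -> lin (fun x => f x - g x).
Proof.
move=> fL gL; apply: (lin_add fL) => a x y.
by rewrite -!scaleN1r (lin_scale (-1) gL).
Qed.

Lemma lin_cst0 : lin (fun _ : V => (0 : W)).
Proof. by move=> a x y; rewrite scaler0 addr0. Qed.

End LinearMaps.

Lemma lin_mull (F : fieldType) (A : algType F) (a : A) : lin (fun x => a * x).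
Proof. by move=> c x y; rewrite mulrDr scalerAr. Qed.

Lemma lin_mulr (F : fieldType) (A : algType F) (a : A) : lin (fun x => x * a).
Proof. by move=> c x y; rewrite mulrDl scalerAl. Qed.

(* A list [s] of vectors induces the
   linear map [lincomb s] from polynomials (the free module on the monomials
   'X^n) sending 'X^n to the n-th vector of [s]; an identity between linear
   combinations of the vectors of [s] is the image of a polynomial identity,
   which [ring] decides. *)
Section LinearCombination.
Variables (F : fieldType) (V : lmodType F) (s : seq V).

Definition lincomb (p : {poly F}) : V := \sum_(i < size s) p`_i *: s`_i.

Lemma lincombD p r : lincomb p + lincomb r = lincomb (p + r).
Proof. by rewrite -big_split; apply: eq_bigr => i _; rewrite coefD scalerDl. Qed.

Lemma lincombN p : - lincomb p = lincomb (- p).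
Proof. by rewrite -sumrN; apply: eq_bigr => i _; rewrite coefN scaleNr. Qed.

Lemma lincombZ c p : c *: lincomb p = lincomb (c%:P * p).
Proof.
by rewrite scaler_sumr; apply: eq_bigr => i _; rewrite mul_polyC coefZ scalerA.
Qed.

Lemma lincombX n : (n < size s)%N -> lincomb 'X^n = s`_n.
Proof.
move=> ltns; rewrite /lincomb (bigD1 (Ordinal ltns)) //= coefXn eqxx scale1r.
rewrite big1 ?addr0 // => j nej; rewrite coefXn.
case: eqP => [ejn|_]; last by rewrite scale0r.
by case/eqP: nej; apply: val_inj.
Qed.

End LinearCombination.

(* [lincomb_atoms s l n] replaces the vectors of [l] by monomials 'X^n,
   'X^(n+1), ...; atoms containing other atoms must be listed first. *)
Ltac lincomb_atoms s l n := lazymatch l with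
  | nil => idtac
  | cons ?v ?l' => rewrite -[v](@lincombX _ _ s n erefl); lincomb_atoms s l' (S n)
  end.

Ltac linear_solve l :=
  let s := fresh "s" in
  set s := l; lincomb_atoms s l 0%N;
  rewrite ?(lincombD, lincombN, lincombZ); apply: f_equal; ring.

Section Tensor.
Variables (F : fieldType) (A B : algType F) (T : tensor A B).

Lemma tens_linl (b : B) : lin (fun a => tens T a b).
Proof. by case: (tens_bilin T). Qed.

Lemma tens_linr (a : A) : lin (tens T a).
Proof. by case: (tens_bilin T). Qed.

Lemma tens0l b : tens T 0 b = 0.   Proof. exact: lin0 (tens_linl b). Qed.
Lemma tens0r a : tens T a 0 = 0.   Proof. exact: lin0 (tens_linr a). Qed.
Lemma tensDl a a' b : tens T (a + a') b = tens T a b + tens T a' b.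
Proof. exact: linD (tens_linl b) a a'. Qed.
Lemma tensBl a a' b : tens T (a - a') b = tens T a b - tens T a' b.
Proof. exact: linB (tens_linl b) a a'. Qed.
Lemma tensNl a b : tens T (- a) b = - tens T a b.
Proof. exact: linN (tens_linl b) a. Qed.
Lemma tensZl c a b : tens T (c *: a) b = c *: tens T a b.
Proof. exact: linZ (tens_linl b) c a. Qed.
Lemma tensDr a b b' : tens T a (b + b') = tens T a b + tens T a b'.
Proof. exact: linD (tens_linr a) b b'. Qed.
Lemma tensBr a b b' : tens T a (b - b') = tens T a b - tens T a b'.
Proof. exact: linB (tens_linr a) b b'. Qed.
Lemma tensNr a b : tens T a (- b) = - tens T a b.
Proof. exact: linN (tens_linr a) b. Qed.
Lemma tensZr c a b : tens T a (c *: b) = c *: tens T a b.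
Proof. exact: linZ (tens_linr a) c b. Qed.

Lemma tens_ext (M : lmodType F) (g1 g2 : T -> M) : lin g1 -> lin g2 ->
  (forall a b, g1 (tens T a b) = g2 (tens T a b)) -> forall t, g1 t = g2 t.
Proof.
move=> g1L g2L g12 t.
have g2tL : bilin (fun a b => g2 (tens T a b)).
  by split=> [b|a]; [exact: lin_comp (tens_linl b) g2L|exact: lin_comp (tens_linr a) g2L].
have [g [_ g_uniq]] := tens_univ T g2tL.
by rewrite (g_uniq g1 g1L g12 t) (g_uniq g2 g2L (fun _ _ => erefl) t).
Qed.

Lemma tens_ext2 (M : lmodType F) (G1 G2 : T -> T -> M) :
  (forall t, lin (G1 t)) -> (forall t, lin (G2 t)) ->
  (forall t', lin (fun t => G1 t t')) -> (forall t', lin (fun t => G2 t t')) ->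
  (forall a b a' b', G1 (tens T a b) (tens T a' b') = G2 (tens T a b) (tens T a' b')) ->
  forall t t', G1 t t' = G2 t t'.
Proof.
move=> G1L G2L G1L' G2L' G12 t t'.
have G12l a b t'' : G1 (tens T a b) t'' = G2 (tens T a b) t''.
  by apply: tens_ext => //; exact: G12.
exact: tens_ext (G1L' t') (G2L' t') (fun a b => G12l a b t') t.
Qed.

Lemma tens_mul_ext (C : algType F) (h : T -> C) : lin h ->
  (forall a b a' b', h (tens T a b * tens T a' b') = h (tens T a b) * h (tens T a' b')) ->
  forall t t', h (t * t') = h t * h t'.
Proof.
move=> hL; apply: tens_ext2.
- by move=> t; exact: lin_comp (lin_mull t) hL.
- by move=> t; exact: lin_comp hL (lin_mull _).
- by move=> t; exact: lin_comp (lin_mulr t) hL.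
- by move=> t; exact: lin_comp hL (lin_mulr _).
Qed.

End Tensor.

Section TensorMaps.
Variable F : fieldType.

Lemma tmap_spec (A B C D : algType F) (T : tensor A B) (T' : tensor C D)
    (f : A -> C) (g : B -> D) : lin f -> lin g ->
  lin (tmap T T' f g) /\ forall a b, tmap T T' f g (tens T a b) = tens T' (f a) (g b).
Proof.
move=> fL gL; rewrite /tmap; eapply epsilon_spec.
have fgL : bilin (fun a b => tens T' (f a) (g b)).
  by split=> [b|a]; [exact: lin_comp fL (tens_linl T' (g b))
                    |exact: lin_comp gL (tens_linr T' (f a))].
by have [h [hP _]] := tens_univ T fgL; exists h.
Qed.

Section Associator.
Variables (A B C : algType F) (TBC : tensor B C) (TAB : tensor A B).
Variables (T1 : tensor A TBC) (T2 : tensor TAB C).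

Definition assoc_slice (a : A) : TBC -> T2 :=
  epsilon (inhabits (fun _ => 0))
    (fun g : TBC -> T2 => lin g /\ forall b c, g (tens TBC b c) = tens T2 (tens TAB a b) c).

Lemma assoc_slice_spec a : lin (assoc_slice a) /\
  forall b c, assoc_slice a (tens TBC b c) = tens T2 (tens TAB a b) c.
Proof.
rewrite /assoc_slice; eapply epsilon_spec.
have abcL : bilin (fun b c => tens T2 (tens TAB a b) c).
  by split=> [c|b]; [exact: lin_comp (tens_linr TAB a) (tens_linl T2 c)
                    |exact: tens_linr T2 _].
by have [g [gP _]] := tens_univ TBC abcL; exists g.
Qed.

Lemma assoc_slice_bilin : bilin assoc_slice.
Proof.
split=> [t|a]; last by case: (assoc_slice_spec a).
move=> c a a'.
have [sL sP] := assoc_slice_spec (c *: a + a').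
have [saL saP] := assoc_slice_spec a; have [sa'L sa'P] := assoc_slice_spec a'.
apply: tens_ext sL (lin_add (lin_scale c saL) sa'L) _ t => b d.
by rewrite sP saP sa'P (tens_linl TAB b) (tens_linl T2 d).
Qed.

Lemma tassoc_spec : lin (tassoc T1 T2) /\
  forall a b c, tassoc T1 T2 (tens T1 a (tens TBC b c)) = tens T2 (tens TAB a b) c.
Proof.
rewrite /tassoc; eapply epsilon_spec.
have [h [[hL hP] _]] := tens_univ T1 assoc_slice_bilin.
exists h; split => // a b c.
by rewrite hP; case: (assoc_slice_spec a) => _ ->.
Qed.

End Associator.
End TensorMaps.

Section AlgebraHoms.
Variable F : fieldType.

Lemma alg_id (A : algType F) : alg_hom (@id A).
Proof. by []. Qed.

Lemma alg_comp (A B C : algType F) (f : A -> B) (g : B -> C) :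
  alg_hom f -> alg_hom g -> alg_hom (fun x => g (f x)).
Proof.
move=> [fL [f1 fM]] [gL [g1 gM]]; split; first exact: lin_comp.
by split=> [|x y]; rewrite ?f1 ?g1 // fM gM.
Qed.

Lemma tmap_alg (A B C D : algType F) (T : tensor A B) (T' : tensor C D)
    (f : A -> C) (g : B -> D) :
  alg_hom f -> alg_hom g -> alg_hom (tmap T T' f g).
Proof.
move=> [fL [f1 fM]] [gL [g1 gM]].
have [hL hP] := tmap_spec T T' fL gL.
split=> //; split; first by rewrite -(tens_one T) hP f1 g1 tens_one.
apply: tens_mul_ext => // a b a' b'.
by rewrite tens_mul !hP fM gM tens_mul.
Qed.

Lemma tassoc_alg (A B C : algType F) (TBC : tensor B C) (TAB : tensor A B)
    (T1 : tensor A TBC) (T2 : tensor TAB C) :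
  alg_hom (tassoc T1 T2).
Proof.
have [hL hP] := tassoc_spec T1 T2.
split=> //; split; first by rewrite -(tens_one T1) -(tens_one TBC) hP !tens_one.
apply: tens_mul_ext => // a s a' s'; rewrite tens_mul.
have sL (a0 : A) := lin_comp (tens_linr T1 a0) hL.
move: s s'; apply: tens_ext2 => [t|t|t|t|b c b' c'].
- exact: lin_comp (lin_mull t) (sL _).
- exact: lin_comp (sL _) (lin_mull _).
- exact: lin_comp (lin_mulr t) (sL _).
- exact: lin_comp (sL _) (lin_mulr _).
by rewrite tens_mul !hP !tens_mul.
Qed.

Lemma alg_inv_hom (A B : algType F) (q : A) (qB : B) (f : A -> B) :
  alg_hom f -> f q = qB -> inv_hom q qB f.
Proof.
move=> [fL [f1 fM]] fq; do 4!split => //.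
by move=> x; rewrite /inv_mem -fq -!fM => ->.
Qed.

Lemma lie_hom6_comp (k : F) (L : lmodType F) (br : L -> L -> L) (A B : algType F)
    (q : A) (qB : B) (f : L -> A) (g : A -> B) :
  lie_hom6 k br q f -> alg_hom g -> g q = qB -> lie_hom6 k br qB (fun x => g (f x)).
Proof.
move=> [fL [f_inv f_br]] [gL [g1 gM]] gq; split; first exact: lin_comp.
split=> [x|x y]; first by rewrite /inv_mem -gq -!gM f_inv.
by rewrite f_br /br6 !(linB gL) !(linD gL) !(linN gL) !(linZ gL) !gM gq.
Qed.

Lemma alg_tens1l (A B : algType F) (T : tensor A B) (g : B -> B) :
  alg_hom g -> alg_hom (fun b => tens T 1 (g b)).
Proof.
move=> [gL [g1 gM]]; split; first exact: lin_comp gL (tens_linr T 1).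
by split=> [|x y]; rewrite ?g1 ?tens_one // gM tens_mul mulr1.
Qed.

Lemma alg_tens1r (A B : algType F) (T : tensor A B) (g : A -> A) :
  alg_hom g -> alg_hom (fun a => tens T (g a) 1).
Proof.
move=> [gL [g1 gM]]; split; first exact: lin_comp gL (tens_linl T 1).
by split=> [|x y]; rewrite ?g1 ?tens_one // gM tens_mul mulr1.
Qed.

End AlgebraHoms.

(* The twisted identity  y_k(a) = a + k q a - a q  of an algebra with a
   distinguished element q; sigma = y_1 is the map of the statement. *)
Definition skew (F : fieldType) (k : F) (A : algType F) (q a : A) : A :=
  locked (a + k *: (q * a) - a * q).

Lemma skewE (F : fieldType) (k : F) (A : algType F) (q a : A) :
  skew k q a = a + k *: (q * a) - a * q.
Proof. by rewrite /skew -lock. Qed.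

Lemma skew_lin (F : fieldType) (k : F) (A : algType F) (q : A) : lin (skew k q).
Proof.
have yL := lin_sub (lin_add (@lin_id _ A) (lin_scale k (lin_mull q))) (lin_mulr q).
by move=> c x y; rewrite !skewE; exact: yL c x y.
Qed.

Lemma alg_hom_skew (F : fieldType) (k : F) (A B : algType F) (q : A) (f : A -> B) :
  alg_hom f -> forall a, f (skew k q a) = skew k (f q) (f a).
Proof. by move=> [fL [_ fM]] a; rewrite !skewE (linB fL) (linD fL) (linZ fL) !fM. Qed.

(* Scalars are pulled out of products (the orientation used for normal forms). *)
Lemma scale_mull (F : fieldType) (A : algType F) (c : F) (u v : A) :
  c *: u * v = c *: (u * v).
Proof. by rewrite scalerAl. Qed.

Lemma scale_mulr (F : fieldType) (A : algType F) (c : F) (u v : A) :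
  u * (c *: v) = c *: (u * v).
Proof. by rewrite scalerAr. Qed.

Lemma br6_commuting (F : fieldType) (k : F) (B : algType F) (Q X Y : B) :
  Q * Q = Q -> Q * X = X * Q -> Q * Y = Y * Q ->
  br6 k Q X Y = X * Y - Y * X + (k - 1) *: (Q * X * (Q * Y) - Q * Y * (Q * X)).
Proof.
move=> QQ QX QY.
have parts U V : Q * U = U * Q -> U * (Q * V) = Q * U * (Q * V).
  by move=> QU; rewrite QU -{1}QQ -!mulrA.
rewrite /br6 -[X * Y * Q]mulrA -[Y * X * Q]mulrA -[X * Q * Y]mulrA -[Y * Q * X]mulrA.
rewrite -QX -QY (parts X Y QX) (parts Y X QY).
linear_solve [:: Q * X * (Q * Y); Q * Y * (Q * X); X * Y; Y * X].
Qed.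

(* Throughout, q is an idempotent of A and every element of A is invariant,
   q x q = q x, as in the enveloping algebra where (U,q) = U. *)
Section InvariantAlgebra.
Variables (F : fieldType) (A : algType F) (q : A).
Hypotheses (qq : q * q = q) (qxq : forall x, q * x * q = q * x).

Lemma qxyq x y : q * x * y * q = q * x * y.
Proof. by rewrite -(mulrA q x y) qxq mulrA. Qed.

Lemma xqq x : x * q * q = x * q.
Proof. by rewrite -mulrA qq. Qed.

Lemma xqyq x y : x * q * y * q = x * q * y.
Proof. by rewrite -(mulrA x q y) -mulrA qxq !mulrA. Qed.

Ltac invariant_simp :=
  rewrite ?(mulrDl, mulrBl, mulrDr, mulrBr) ?(mulrN, mulNr, opprK, scale_mull,
    scale_mulr, scalerA) ?mulrA;
  rewrite ?qxq ?qxyq ?xqq ?xqyq ?qq.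

Lemma q_skew (k : F) a : q * skew k q a = k *: (q * a).
Proof. rewrite !skewE; invariant_simp; linear_solve [:: q * a]. Qed.

Lemma skew_q (k : F) a : skew k q a * q = k *: (q * a).
Proof. rewrite !skewE; invariant_simp; linear_solve [:: q * a; a * q]. Qed.

Lemma skew_mul (k : F) a b :
  skew k q a * skew k q b = a * b - a * b * q + (k * k) *: (q * a * b).
Proof.
rewrite !skewE; invariant_simp.
linear_solve [:: a * q * b; q * a * b; a * b * q; a * b].
Qed.

Lemma q_br6 (k : F) a b : q * br6 k q a b = k *: (q * a * b - q * b * a).
Proof. rewrite /br6; invariant_simp; linear_solve [:: q * a * b; q * b * a]. Qed.

Lemma br6_q (k : F) a b : br6 k q a b * q = k *: (a * q * b - b * q * a).
Proof.
rewrite /br6; invariant_simp.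
linear_solve [:: a * q * b; b * q * a; a * b * q; b * a * q].
Qed.

Lemma skew_br6 (k : F) a b :
  skew k q (br6 k q a b) = skew k q a * skew k q b - skew k q b * skew k q a.
Proof.
rewrite !skew_mul skewE q_br6 br6_q /br6 ?(scalerBr, scalerA).
linear_solve [:: a * q * b; b * q * a; a * b * q; b * a * q; q * a * b; q * b * a;
  a * b; b * a].
Qed.

Lemma skew_q_q (k : F) : skew k q q = k *: q.
Proof. by rewrite skewE qq addrAC subrr add0r. Qed.

Lemma skew1_alg : alg_hom (skew 1 q).
Proof.
split; first exact: skew_lin.
split=> [|a b]; first by rewrite skewE mulr1 mul1r scale1r addrK.
rewrite (skew_mul 1) !skewE mulr1 scale1r !mulrA; linear_solve [:: q * a * b; a * b * q; a * b].
Qed.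

Lemma xq_skew (k : F) x a : x * q * skew k q a = k *: (x * q * a).
Proof. by rewrite -mulrA q_skew scale_mulr mulrA. Qed.

Lemma qx_skew (k : F) x a : q * x * skew k q a = k *: (q * x * a).
Proof. by rewrite -qxq xq_skew qxq. Qed.

Section Coproduct.
Variables (k : F) (T : tensor A A).

Local Notation Q := (tens T q q).

(* prim and Pq are locked: they are the atoms of the computations below, and
   rewriting must not see through them. *)
Definition prim (a : A) : T := locked (tens T a 1 + tens T 1 a).
Definition Pq (a : A) : T := locked (tens T (q * a) q + tens T q (q * a)).
Definition delta (a : A) : T := prim (skew k q a) + (1 - k) *: Pq a.

Lemma primE a : prim a = tens T a 1 + tens T 1 a.
Proof. by rewrite /prim -lock. Qed.

Lemma PqE a : Pq a = tens T (q * a) q + tens T q (q * a).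
Proof. by rewrite /Pq -lock. Qed.

Lemma QQ : Q * Q = Q.
Proof. by rewrite tens_mul qq. Qed.

Lemma Pq_lin : lin Pq.
Proof.
move=> c x y; rewrite !PqE; move: c x y.
exact: lin_add (lin_comp (lin_mull q) (tens_linl T q))
               (lin_comp (lin_mull q) (tens_linr T q)).
Qed.

Lemma delta_lin : lin delta.
Proof.
apply: lin_add _ (lin_scale _ Pq_lin) => c x y; rewrite !primE; move: c x y.
exact: lin_comp (skew_lin k q) (lin_add (tens_linl T 1) (tens_linr T 1)).
Qed.

Ltac tensor_simp :=
  rewrite ?(mulrDl, mulrDr, mulrBl, mulrBr);
  rewrite ?(mulrN, mulNr, opprK, scale_mull, scale_mulr, scalerA);
  rewrite ?tens_mul ?mulrA ?mulr1 ?mul1r;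
  rewrite ?(qq, qxq, qxyq, xqq, xqyq, q_skew, skew_q, qx_skew,
            scale_mull, scale_mulr, scalerA, mulrA);
  rewrite ?(tensDl, tensBl, tensNl, tensZl, tensDr, tensBr, tensNr, tensZr, scalerA, scalerN,
            opprK, scalerBr, scalerDr).

(* Elements of the form b (x) 1 and 1 (x) c commute, so prim preserves
   commutators. *)
Lemma prim_commutator a b : prim a * prim b - prim b * prim a = prim (a * b - b * a).
Proof.
rewrite !primE; tensor_simp.
linear_solve [:: tens T (a * b) 1; tens T (b * a) 1; tens T 1 (a * b);
  tens T 1 (b * a); tens T a b; tens T b a].
Qed.

Lemma Q_prim_skew a : Q * prim (skew k q a) = k *: Pq a.
Proof. rewrite !primE !PqE; tensor_simp; linear_solve [:: tens T (q * a) q; tens T q (q * a)]. Qed.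

Lemma prim_skew_Q a : prim (skew k q a) * Q = k *: Pq a.
Proof. rewrite !primE !PqE; tensor_simp; linear_solve [:: tens T (q * a) q; tens T q (q * a)]. Qed.

Lemma Q_Pq a : Q * Pq a = Pq a.
Proof. by rewrite !PqE; tensor_simp. Qed.

Lemma Pq_Q a : Pq a * Q = Pq a.
Proof. by rewrite !PqE; tensor_simp. Qed.

Lemma Q_delta a : Q * delta a = Pq a.
Proof. by rewrite /delta mulrDr scale_mulr Q_prim_skew Q_Pq -scalerDl addrC subrK scale1r. Qed.

Lemma delta_Q a : delta a * Q = Pq a.
Proof. by rewrite /delta mulrDl scale_mull prim_skew_Q Pq_Q -scalerDl addrC subrK scale1r. Qed.

Lemma delta_inv a : inv_mem Q (delta a).
Proof. by rewrite /inv_mem -mulrA delta_Q Q_Pq Q_delta. Qed.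

Lemma skew_delta a : skew k Q (delta a) = prim (skew k q a).
Proof.
rewrite [LHS]skewE Q_delta delta_Q /delta.
linear_solve [:: prim (skew k q a); Pq a].
Qed.

Lemma prim_skew_Pq a b :
  prim (skew k q a) * Pq b = Pq b * prim (skew k q a) + k *: Pq (a * b - b * a).
Proof.
rewrite !primE !PqE; tensor_simp.
linear_solve [:: tens T (q * a * b) q; tens T (q * b * a) q; tens T (q * a) (q * b);
  tens T (q * b) (q * a); tens T q (q * a * b); tens T q (q * b * a)].
Qed.

Lemma Pq_commutator a b : Pq a * Pq b = Pq b * Pq a + Pq (a * b - b * a).
Proof.
rewrite !PqE; tensor_simp.
linear_solve [:: tens T (q * a * b) q; tens T (q * b * a) q; tens T (q * a) (q * b);
  tens T (q * b) (q * a); tens T q (q * a * b); tens T q (q * b * a)].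
Qed.

Lemma Pq_br6 a b : Pq (br6 k q a b) = k *: Pq (a * b - b * a).
Proof.
rewrite !PqE q_br6 mulrBr !mulrA; tensor_simp.
linear_solve [:: tens T (q * a * b) q; tens T (q * b * a) q;
  tens T q (q * a * b); tens T q (q * b * a)].
Qed.

Lemma delta_br6 a b : delta (br6 k q a b) = br6 k Q (delta a) (delta b).
Proof.
have Q_comm c : Q * delta c = delta c * Q by rewrite Q_delta delta_Q.
rewrite (br6_commuting k QQ (Q_comm a) (Q_comm b)) !Q_delta.
rewrite /delta skew_br6 Pq_br6 -prim_commutator.
rewrite ?(mulrDl, mulrDr, scale_mull, scale_mulr, scalerA).
rewrite !prim_skew_Pq (Pq_commutator a b) !(linB Pq_lin).
linear_solve [:: prim (skew k q a) * prim (skew k q b); prim (skew k q b) * prim (skew k q a);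
  Pq b * prim (skew k q a); Pq a * prim (skew k q b); Pq b * Pq a; Pq (a * b); Pq (b * a)].
Qed.

End Coproduct.
End InvariantAlgebra.

Section Enveloping.
Variables (F : fieldType) (k : F) (L : lmodType F) (br : L -> L -> L).
Variables (U : algType F) (q : U) (i : L -> U).
Hypothesis HU : is_env6 k br q i.

Let qq : q * q = q := proj1 HU.
Let qxq : forall x, q * x * q = q * x := proj1 (proj2 HU).

Lemma env_hom_exists (A : algType F) (qA : A) (f : L -> A) :
  qA * qA = qA -> lie_hom6 k br qA f ->
  exists phi : U -> A, [/\ alg_hom phi, phi q = qA & forall x, phi (i x) = f x].
Proof.
move=> qAqA f_lie; have [_ [_ [_ univ]]] := HU.
have [phi [[[phiL [phi1 [phiM [phiq _]]]] phi_i] _]] := univ A qA qAqA f f_lie.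
by exists phi.
Qed.

Lemma env_hom_unique (A : algType F) (qA : A) (g1 g2 : U -> A) :
  qA * qA = qA -> alg_hom g1 -> alg_hom g2 -> g1 q = qA -> g2 q = qA ->
  (forall x, g1 (i x) = g2 (i x)) -> forall u, g1 u = g2 u.
Proof.
move=> qAqA g1_hom g2_hom g1q g2q g12 u; have [_ [_ [i_lie univ]]] := HU.
have [phi [_ phi_uniq]] := univ A qA qAqA _ (lie_hom6_comp i_lie g2_hom g2q).
by rewrite (phi_uniq g1 (alg_inv_hom g1_hom g1q) g12 u)
           (phi_uniq g2 (alg_inv_hom g2_hom g2q) (fun _ => erefl) u).
Qed.

Lemma counit_exists :
  exists eps : U -> F^o, [/\ alg_hom eps, eps q = 1 & forall x, eps (i x) = 0].
Proof.
apply: env_hom_exists; first exact: mulr1.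
split; first exact: lin_cst0.
split=> [x|x y]; first by rewrite /inv_mem !mulr1.
by rewrite /br6 !(mulr0, mul0r, scaler0, subrr, addr0).
Qed.

Lemma coproduct_exists (UU : tensor U U) :
  exists Delta : U -> UU, [/\ alg_hom Delta, Delta q = tens UU q q
    & forall x, Delta (i x) = delta q k UU (i x)].
Proof.
apply: env_hom_exists; first exact: QQ qq UU.
have [_ [_ [[iL [_ i_br]] _]]] := HU.
split; first exact: lin_comp iL (delta_lin _ _ _).
split=> [x|x y]; first exact: delta_inv qq qxq k UU (i x).
by rewrite i_br (delta_br6 qq qxq).
Qed.

Section CoproductAxioms.
Variables (UU : tensor U U) (Delta : U -> UU) (eps : U -> F^o).
Hypotheses (Delta_hom : alg_hom Delta) (Delta_q : Delta q = tens UU q q).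
Hypothesis Delta_i : forall x, Delta (i x) = delta q k UU (i x).
Hypotheses (eps_hom : alg_hom eps) (eps_q : eps q = 1).
Hypothesis eps_i : forall x, eps (i x) = 0.

Lemma coassoc_on (U_UU : tensor U UU) (UU_U : tensor UU U) a :
  Delta a = delta q k UU a ->
  tassoc U_UU UU_U (tmap UU U_UU id Delta (Delta a)) = tmap UU UU_U Delta id (Delta a).
Proof.
move=> Da; have [DL [D1 DM]] := Delta_hom.
have D_skew : Delta (skew k q a) = prim UU (skew k q a).
  by rewrite (alg_hom_skew k q Delta_hom) Delta_q Da (skew_delta qq qxq).
have D_qa : Delta (q * a) = Pq q UU a by rewrite DM Delta_q Da (Q_delta qq qxq).
have [lL lP] := tmap_spec UU U_UU (@lin_id _ U) DL.
have [rL rP] := tmap_spec UU UU_U DL (@lin_id _ U).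
have [asL asP] := tassoc_spec U_UU UU_U.
rewrite Da /delta !primE !PqE.
rewrite !(linD lL, linZ lL, lP, linD rL, linZ rL, rP) /=.
rewrite D_skew D_qa Delta_q D1 -(tens_one UU) !primE !PqE.
rewrite ?(tensDl, tensDr, tensZl, tensZr) !(linD asL, linZ asL, asP).
linear_solve [:: tens UU_U (tens UU (skew k q a) 1) 1; tens UU_U (tens UU 1 (skew k q a)) 1;
  tens UU_U (tens UU 1 1) (skew k q a); tens UU_U (tens UU (q * a) q) q;
  tens UU_U (tens UU q (q * a)) q; tens UU_U (tens UU q q) (q * a)].
Qed.

(* Both sides of coassociativity are homomorphisms sending q to q (x) q (x) q;
   they agree on i(L) by coassoc_on. *)
Lemma coassoc (U_UU : tensor U UU) (UU_U : tensor UU U) a :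
  tassoc U_UU UU_U (tmap UU U_UU id Delta (Delta a)) = tmap UU UU_U Delta id (Delta a).
Proof.
have [DL _] := Delta_hom.
have [_ lP] := tmap_spec UU U_UU (@lin_id _ U) DL.
have [_ rP] := tmap_spec UU UU_U DL (@lin_id _ U).
have [_ asP] := tassoc_spec U_UU UU_U.
move: a; apply: (env_hom_unique (qA := tens UU_U (tens UU q q) q)).
- by rewrite !tens_mul qq.
- exact: alg_comp Delta_hom (alg_comp (tmap_alg _ _ (@alg_id _ U) Delta_hom) (tassoc_alg _ _)).
- exact: alg_comp Delta_hom (tmap_alg _ _ Delta_hom (@alg_id _ U)).
- by rewrite Delta_q lP /= Delta_q asP.
- by rewrite Delta_q rP Delta_q.
- by move=> x; apply: coassoc_on.
Qed.

Lemma eps_skew a : eps a = 0 -> eps (skew k q a) = 0.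
Proof.
by move=> ea; rewrite (alg_hom_skew k q eps_hom) eps_q ea skewE mulr0 scaler0 mul0r subr0 addr0.
Qed.

Lemma counitl_on (kU : tensor F^o U) a : eps a = 0 -> Delta a = delta q k UU a ->
  tmap UU kU eps id (Delta a) = tens kU 1 (skew 1 q a).
Proof.
move=> ea Da; have [eL [e1 eM]] := eps_hom.
have [mL mP] := tmap_spec UU kU eL (@lin_id _ U).
rewrite Da /delta !primE !PqE !(linD mL, linZ mL, mP) /=.
rewrite (eps_skew ea) e1 eM eps_q ea mulr0 !tens0l !add0r !skewE scale1r.
rewrite ?(tensDr, tensBr, tensNr, tensZr).
linear_solve [:: tens kU 1 (q * a); tens kU 1 (a * q); tens kU 1 a].
Qed.

Lemma counitr_on (Uk : tensor U F^o) a : eps a = 0 -> Delta a = delta q k UU a ->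
  tmap UU Uk id eps (Delta a) = tens Uk (skew 1 q a) 1.
Proof.
move=> ea Da; have [eL [e1 eM]] := eps_hom.
have [mL mP] := tmap_spec UU Uk (@lin_id _ U) eL.
rewrite Da /delta !primE !PqE !(linD mL, linZ mL, mP) /=.
rewrite (eps_skew ea) e1 eM eps_q ea mulr0 !tens0r !addr0 !skewE scale1r.
rewrite ?(tensDl, tensBl, tensNl, tensZl).
linear_solve [:: tens Uk (q * a) 1; tens Uk (a * q) 1; tens Uk a 1].
Qed.

(* Both sides of the counit identities are homomorphisms sending q to
   1 (x) q, resp. q (x) 1; they agree on i(L). *)
Lemma counitl (kU : tensor F^o U) a : tmap UU kU eps id (Delta a) = tens kU 1 (skew 1 q a).
Proof.
have [eL _] := eps_hom; have [_ mP] := tmap_spec UU kU eL (@lin_id _ U).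
move: a; apply: (env_hom_unique (qA := tens kU 1 q)).
- by rewrite tens_mul mulr1 qq.
- exact: alg_comp Delta_hom (tmap_alg _ _ eps_hom (@alg_id _ U)).
- exact: alg_tens1l (skew1_alg qq qxq).
- by rewrite Delta_q mP eps_q.
- by rewrite (skew_q_q qq) scale1r.
- by move=> x; rewrite counitl_on ?Delta_i.
Qed.

Lemma counitr (Uk : tensor U F^o) a : tmap UU Uk id eps (Delta a) = tens Uk (skew 1 q a) 1.
Proof.
have [eL _] := eps_hom; have [_ mP] := tmap_spec UU Uk (@lin_id _ U) eL.
move: a; apply: (env_hom_unique (qA := tens Uk q 1)).
- by rewrite tens_mul mulr1 qq.
- exact: alg_comp Delta_hom (tmap_alg _ _ (@alg_id _ U) eps_hom).
- exact: alg_tens1r (skew1_alg qq qxq).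
- by rewrite Delta_q mP eps_q.
- by rewrite (skew_q_q qq) scale1r.
- by move=> x; rewrite counitr_on ?Delta_i.
Qed.

End CoproductAxioms.
End Enveloping.

Theorem proposition7p3 (F : fieldType) (k : F) (hk : k != 0)
  (L : lmodType F) (br : L -> L -> L) (HL : is_lie_bracket br)
  (U : algType F) (q : U) (i : L -> U) (HU : is_env6 k br q i)
  (UU : tensor U U) (U_UU : tensor U UU) (UU_U : tensor UU U)
  (kU : tensor F^o U) (Uk : tensor U F^o) :
  let sigma := fun a : U => a + q * a - a * q in
  exists (eps : U -> F^o) (Delta : U -> UU),
    alg_hom eps /\ alg_hom Delta /\
    Delta q = tens UU q q /\
    (forall x : L,
       Delta (i x) =
         tens UU (i x + k *: (q * i x) - i x * q) 1
       + tens UU 1 (i x + k *: (q * i x) - i x * q)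
       + (1 - k) *: tens UU (q * i x) q
       + (1 - k) *: tens UU q (q * i x)) /\
    (forall a : U,
       tassoc U_UU UU_U (tmap UU U_UU id Delta (Delta a))
       = tmap UU UU_U Delta id (Delta a)) /\
    eps q = 1 /\ (forall x : L, eps (i x) = 0) /\
    (forall a : U, tmap UU kU eps id (Delta a) = tens kU 1 (sigma a)) /\
    (forall a : U, tmap UU Uk id eps (Delta a) = tens Uk (sigma a) 1).
Proof.
move=> sigma.
have [eps [eps_hom eps_q eps_i]] := counit_exists HU.
have [Delta [Delta_hom Delta_q Delta_i]] := coproduct_exists HU UU.
have sigmaE a : sigma a = skew 1 q a by rewrite skewE scale1r.
exists eps, Delta; do 3!split => //.
split=> [x|]; first by rewrite Delta_i /delta primE PqE skewE scalerDr addrA.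
split=> [a|]; first exact (coassoc HU Delta_hom Delta_q Delta_i U_UU UU_U a).
do 2!split => //.
by split=> a; rewrite sigmaE;
  [exact (counitl HU Delta_hom Delta_q Delta_i eps_hom eps_q eps_i kU a)
  |exact (counitr HU Delta_hom Delta_q Delta_i eps_hom eps_q eps_i Uk a)].
Qed.
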